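(* Let $m$ be a positive integer and $k\ge0$. If $\|m\alpha\|\le\|q_k\alpha\|$, then $\mathrm{ab}_\alpha(m)\ge q_{k+1}$. If $\|m\alpha\|\ge\|q_k\alpha\|$, then $\mathrm{ab}_\alpha(m)<q_{k+1}+q_k$.
   Context: $\alpha\in(0,1)$ irrational, $\alpha=[0;a_1,a_2,\ldots]$ with positive integers $a_i$, $a_1\ge2$; $q_{-1}=0$, $q_0=1$, $q_1=a_1$, $q_k=a_kq_{k-1}+q_{k-2}$ ($k\ge2$). $\|x\|$ is the distance from $x$ to the nearest integer. Sturmian words of slope $\alpha$: with $R(\rho)=\{\rho+\alpha\}$ on $[0,1)$ and either $I_0=[0,1-\alpha)$ or $I_0=(0,1-\alpha]$ ($I_1$ its complement), $\mathbf{s}_{\rho,\alpha}$ has $n$-th letter $0$ iff $R^n(\rho)\in I_0$; they share a set $\mathcal{L}_\alpha$ of finite factors. An abelian power of period $m$ and exponent $e$ is a concatenation of $e$ pairwise abelian equivalent words (same numbers of $0$s and $1$s) of length $m$; $\mathrm{ab}_\alpha(m)$ is the maximum exponent of an abelian power of period $m$ in $\mathcal{L}_\alpha$ (it is known that $\mathrm{ab}_\alpha(m)=\lfloor 1/\|m\alpha\|\rfloor$). *)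

From Stdlib Require Import Reals Lra Lia ZArith Arith List.
Open Scope R_scope.

Definition frac (x : R) : R := x - IZR (Int_part x).

Definition dist_int (x : R) : R := Rmin (frac x) (1 - frac x).

Definition irrational (x : R) : Prop :=
  forall p q : Z, q <> 0%Z -> x <> IZR p / IZR q.

(* Continued fraction expansion alpha = [0; a_1, a_2, ...] via the Gauss map:
   cf_rem alpha 0 = alpha, cf_rem alpha (k+1) = {1 / cf_rem alpha k},
   a_(k+1) = floor (1 / cf_rem alpha k). *)
Fixpoint cf_rem (alpha : R) (k : nat) : R :=
  match k with
  | O => alpha
  | S k' => frac (1 / cf_rem alpha k')
  end.

Definition cf_a (alpha : R) (k : nat) : nat :=
  match k with
  | O => 0%nat
  | S k' => Z.to_nat (Int_part (1 / cf_rem alpha k'))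
  end.

(* cf_qpair alpha k = (q_(k-1), q_k), with q_(-1) = 0, q_0 = 1,
   q_k = a_k q_(k-1) + q_(k-2). *)
Fixpoint cf_qpair (alpha : R) (k : nat) : nat * nat :=
  match k with
  | O => (0%nat, 1%nat)
  | S k' => let (qm, q) := cf_qpair alpha k' in
            (q, (cf_a alpha (S k') * q + qm)%nat)
  end.

Definition cf_q (alpha : R) (k : nat) : nat := snd (cf_qpair alpha k).

(* Sturmian word s_{rho,alpha}; letters are bools (false = 0, true = 1).
   closed_left = true : I_0 = [0, 1 - alpha);  closed_left = false : I_0 = (0, 1 - alpha]. *)
Definition sturmian (alpha rho : R) (closed_left : bool) (n : nat) : bool :=
  let x := frac (rho + INR n * alpha) in
  if closed_left
  then negb (if Rlt_dec x (1 - alpha) then true else false)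
  else negb (if Rlt_dec 0 x then (if Rle_dec x (1 - alpha) then true else false)
             else false).

Definition factor_at (s : nat -> bool) (i len : nat) : list bool :=
  map (fun t => s (i + t)%nat) (seq 0 len).

Definition in_L (alpha : R) (w : list bool) : Prop :=
  exists (rho : R) (closed_left : bool) (i : nat),
    0 <= rho < 1 /\ w = factor_at (sturmian alpha rho closed_left) i (length w).

Definition count_ones (w : list bool) : nat := count_occ Bool.bool_dec w true.
Definition count_zeros (w : list bool) : nat := count_occ Bool.bool_dec w false.

Definition abelian_equiv (u v : list bool) : Prop :=
  count_zeros u = count_zeros v /\ count_ones u = count_ones v.

Definition abelian_power (m e : nat) (w : list bool) : Prop :=
  length w = (m * e)%nat /\
  forall j j' : nat, (j < e)%nat -> (j' < e)%nat ->
    abelian_equiv (firstn m (skipn (j * m) w)) (firstn m (skipn (j' * m) w)).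

(* ab_alpha(m) >= n : some abelian power of period m in L_alpha has exponent >= n *)
Definition ab_ge (alpha : R) (m n : nat) : Prop :=
  exists (w : list bool) (e : nat), in_L alpha w /\ abelian_power m e w /\ (n <= e)%nat.

(* ab_alpha(m) < n : every abelian power of period m in L_alpha has exponent < n *)
Definition ab_lt (alpha : R) (m n : nat) : Prop :=
  forall (w : list bool) (e : nat), in_L alpha w -> abelian_power m e w -> (e < n)%nat.

From Stdlib Require Import Reals Lra Lia ZArith Arith List.
Open Scope R_scope.

(* The number of 1s in the factor of length m at position i of a Sturmian word
   is h (i + m) - h i, where h n is the floor (or ceiling) of rho + n alpha.
   So e consecutive blocks of length m are abelian equivalent exactly when the
   floors along the progression z + j m alpha (j <= e) increase by a constant
   c, which forces e |m alpha - c| < 1 and, for a suitable rho, is implied by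
   it: an abelian power of period m and exponent e exists iff e ||m alpha|| < 1.
   On the continued-fraction side, with eta_k = theta_0 ... theta_(k-1) the
   product of the Gauss-map remainders, q_k alpha - p_k = (-1)^k eta_(k+1) and
   q_(k+1) eta_(k+1) + q_k eta_(k+2) = 1.  As a_1 >= 2 gives
   eta_(k+1) <= alpha <= 1/2, we get ||q_k alpha|| = eta_(k+1) and hence
   q_(k+1) ||q_k alpha|| < 1 < (q_(k+1) + q_k) ||q_k alpha||. *)

Lemma Int_part_eq (x : R) (z : Z) : IZR z <= x < IZR z + 1 -> Int_part x = z.
Proof. intros Hx. symmetry. apply Int_part_spec. lra. Qed.

Lemma frac_range (x : R) : 0 <= frac x < 1.
Proof. unfold frac. destruct (base_Int_part x). lra. Qed.

Lemma dist_int_le_Rabs (x : R) (c : Z) : dist_int x <= Rabs (x - IZR c).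
Proof.
  unfold dist_int, frac. destruct (base_Int_part x) as [H1 H2].
  destruct (Z_le_gt_dec c (Int_part x)) as [Hc | Hc].
  - apply IZR_le in Hc. rewrite Rabs_right by lra.
    apply (Rle_trans _ _ _ (Rmin_l _ _)). lra.
  - assert (Hc' : (Int_part x + 1 <= c)%Z) by lia.
    apply IZR_le in Hc'. rewrite plus_IZR in Hc'. rewrite Rabs_left1 by lra.
    apply (Rle_trans _ _ _ (Rmin_r _ _)). lra.
Qed.

Lemma dist_int_attained (x : R) : exists c : Z, Rabs (x - IZR c) = dist_int x.
Proof.
  unfold dist_int, frac. destruct (base_Int_part x) as [H1 H2].
  destruct (Rle_dec (x - IZR (Int_part x)) (1 - (x - IZR (Int_part x)))).
  - exists (Int_part x). rewrite Rmin_left, Rabs_right; lra.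
  - exists (Int_part x + 1)%Z. rewrite Rmin_right, plus_IZR, Rabs_left1; lra.
Qed.

Lemma dist_int_IZR_add (c : Z) (t : R) : Rabs t <= / 2 -> dist_int (IZR c + t) = Rabs t.
Proof.
  intros Ht. unfold dist_int, frac.
  destruct (Rle_or_lt 0 t) as [H | H].
  - rewrite Rabs_right in * by lra. rewrite (Int_part_eq _ c) by lra.
    rewrite Rmin_left; lra.
  - rewrite Rabs_left in * by lra.
    rewrite (Int_part_eq _ (c - 1)) by (rewrite minus_IZR; lra).
    rewrite minus_IZR, Rmin_right; lra.
Qed.

Fixpoint cf_rem_prod (alpha : R) (k : nat) : R :=
  match k with O => 1 | S k' => cf_rem_prod alpha k' * cf_rem alpha k' end.

Lemma cf_q_1 (alpha : R) : cf_q alpha 1 = cf_a alpha 1.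
Proof. unfold cf_q. simpl. lia. Qed.

Lemma cf_q_SS (alpha : R) (k : nat) :
  cf_q alpha (S (S k)) = (cf_a alpha (S (S k)) * cf_q alpha (S k) + cf_q alpha k)%nat.
Proof. unfold cf_q. simpl. destruct (cf_qpair alpha k). reflexivity. Qed.

Section ContinuedFraction.

Variable alpha : R.
Hypothesis alpha_range : 0 < alpha < 1.

Lemma cf_rem_range k : 0 <= cf_rem alpha k < 1.
Proof. destruct k; simpl; [lra | apply frac_range]. Qed.

Lemma cf_a_S k : 0 < cf_rem alpha k ->
  INR (cf_a alpha (S k)) = 1 / cf_rem alpha k - cf_rem alpha (S k) /\
  (1 <= cf_a alpha (S k))%nat.
Proof.
  intros Hpos. destruct (cf_rem_range k) as [_ Hlt1].
  cbn [cf_a cf_rem]. unfold frac.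
  set (y := 1 / cf_rem alpha k).
  assert (Hy : 1 < y).
  { unfold y. apply (Rmult_lt_reg_l (cf_rem alpha k)); [lra |].
    field_simplify; lra. }
  destruct (base_Int_part y) as [B1 B2].
  assert (Hz : (0 < Int_part y)%Z) by (apply lt_IZR; lra).
  split.
  - rewrite INR_IZR_INZ, Z2Nat.id by lia. ring.
  - lia.
Qed.

Lemma cf_q_pos k : (1 <= cf_q alpha k)%nat.
Proof.
  enough (H : (1 <= cf_q alpha k)%nat /\ (1 <= cf_q alpha (S k))%nat) by apply H.
  induction k as [|k [IH0 IH1]].
  - rewrite cf_q_1. split; [reflexivity |]. apply (cf_a_S 0). simpl. lra.
  - split; [exact IH1 |]. rewrite cf_q_SS. lia.
Qed.

Lemma alpha_le_half : (2 <= cf_a alpha 1)%nat -> alpha <= / 2.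
Proof.
  intros Ha1. apply le_INR in Ha1.
  destruct (cf_a_S 0) as [Ha _]; [simpl; lra |].
  destruct (cf_rem_range 1). rewrite Ha in Ha1. change (cf_rem alpha 0) with alpha in Ha1.
  replace (INR 2) with 2 in Ha1 by (simpl; lra).
  assert (H2 : 2 * alpha <= 1 / alpha * alpha) by (apply Rmult_le_compat_r; lra).
  replace (1 / alpha * alpha) with 1 in H2 by (field; lra). lra.
Qed.

Lemma cf_q_error_pair k : (forall i, (i <= k)%nat -> 0 < cf_rem alpha i) ->
  (exists p : Z, INR (cf_q alpha k) * alpha = IZR p + (-1) ^ k * cf_rem_prod alpha (S k)) /\
  (exists p : Z,
     INR (cf_q alpha (S k)) * alpha = IZR p + (-1) ^ S k * cf_rem_prod alpha (S (S k))).
Proof.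
  induction k as [|k IH]; intros Hpos.
  - split; [exists 0%Z; simpl; ring |].
    exists 1%Z. rewrite cf_q_1. destruct (cf_a_S 0) as [Ha _]; [apply Hpos; lia |].
    rewrite Ha. simpl. field. lra.
  - destruct IH as [[p0 E0] [p1 E1]]; [intros i Hi; apply Hpos; lia |].
    split; [exists p1; exact E1 |].
    exists (Z.of_nat (cf_a alpha (S (S k))) * p1 + p0)%Z.
    destruct (cf_a_S (S k)) as [Ha _]; [apply Hpos; lia |].
    rewrite cf_q_SS, plus_IZR, mult_IZR, <- INR_IZR_INZ, plus_INR, mult_INR,
      Rmult_plus_distr_r, Rmult_assoc, E0, E1, Ha.
    pose proof (Hpos (S k) (le_n _)).
    cbn [cf_rem_prod pow]. field. lra.
Qed.

Lemma cf_q_error k : (forall i, (i < k)%nat -> 0 < cf_rem alpha i) ->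
  exists p : Z, INR (cf_q alpha k) * alpha = IZR p + (-1) ^ k * cf_rem_prod alpha (S k).
Proof.
  destruct k as [|k]; intros Hpos.
  - exists 0%Z. simpl. ring.
  - apply (cf_q_error_pair k). intros i Hi. apply Hpos. lia.
Qed.

Hypothesis alpha_irrational : irrational alpha.

Lemma cf_rem_pos k : 0 < cf_rem alpha k.
Proof.
  (* if theta_k = 0, then q_k alpha would be an integer *)
  induction k as [k IH] using (well_founded_induction lt_wf).
  destruct (cf_rem_range k) as [[Hpos | Hzero] _]; [exact Hpos | exfalso].
  destruct (cf_q_error k IH) as [p Hp].
  cbn [cf_rem_prod] in Hp. rewrite <- Hzero, !Rmult_0_r, Rplus_0_r in Hp.
  pose proof (cf_q_pos k) as Hq.
  apply (alpha_irrational p (Z.of_nat (cf_q alpha k))); [lia |].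
  apply le_INR in Hq. rewrite <- INR_IZR_INZ, <- Hp. simpl in Hq. field. lra.
Qed.

Lemma cf_rem_prod_pos k : 0 < cf_rem_prod alpha k.
Proof.
  induction k as [|k IH]; simpl; [lra |].
  apply Rmult_lt_0_compat; [exact IH | apply cf_rem_pos].
Qed.

Lemma cf_rem_prod_le_alpha k : cf_rem_prod alpha (S k) <= alpha.
Proof.
  induction k as [|k IH]; [simpl; lra |].
  change (cf_rem_prod alpha (S (S k))) with (cf_rem_prod alpha (S k) * cf_rem alpha (S k)).
  pose proof (cf_rem_range (S k)). pose proof (cf_rem_prod_pos (S k)). nra.
Qed.

Lemma cf_det k :
  INR (cf_q alpha (S k)) * cf_rem_prod alpha (S k) +
  INR (cf_q alpha k) * cf_rem_prod alpha (S (S k)) = 1.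
Proof.
  induction k as [|k IH].
  - rewrite cf_q_1. destruct (cf_a_S 0) as [Ha _]; [apply cf_rem_pos |].
    rewrite Ha. simpl. field. lra.
  - rewrite <- IH.
    destruct (cf_a_S (S k)) as [Ha _]; [apply cf_rem_pos |].
    rewrite cf_q_SS, plus_INR, mult_INR, Ha.
    pose proof (cf_rem_pos (S k)).
    cbn [cf_rem_prod]. field. lra.
Qed.

Lemma dist_int_cf_q k : (2 <= cf_a alpha 1)%nat ->
  dist_int (INR (cf_q alpha k) * alpha) = cf_rem_prod alpha (S k).
Proof.
  intros Ha1. destruct (cf_q_error k (fun i _ => cf_rem_pos i)) as [p ->].
  pose proof (alpha_le_half Ha1). pose proof (cf_rem_prod_le_alpha k).
  pose proof (cf_rem_prod_pos (S k)).
  assert (Habs : Rabs ((-1) ^ k * cf_rem_prod alpha (S k)) = cf_rem_prod alpha (S k))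
    by (rewrite Rabs_mult, pow_1_abs, Rabs_right; lra).
  rewrite dist_int_IZR_add; lra.
Qed.

Lemma cf_q_S_mul_rem_prod_lt k : INR (cf_q alpha (S k)) * cf_rem_prod alpha (S k) < 1.
Proof.
  pose proof (cf_det k) as Hdet. pose proof (cf_rem_prod_pos (S (S k))).
  pose proof (cf_q_pos k) as Hq. apply le_INR in Hq. simpl in Hq. nra.
Qed.

Lemma cf_q_add_mul_rem_prod_gt k :
  1 < INR (cf_q alpha (S k) + cf_q alpha k) * cf_rem_prod alpha (S k).
Proof.
  pose proof (cf_det k) as Hdet.
  change (cf_rem_prod alpha (S (S k)))
    with (cf_rem_prod alpha (S k) * cf_rem alpha (S k)) in Hdet.
  assert (Hgap : 0 < INR (cf_q alpha k) * (cf_rem_prod alpha (S k) * (1 - cf_rem alpha (S k)))).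
  { pose proof (cf_rem_range (S k)). pose proof (cf_rem_prod_pos (S k)).
    pose proof (cf_q_pos k) as Hq. apply le_INR in Hq. simpl in Hq.
    apply Rmult_lt_0_compat; [lra |]. apply Rmult_lt_0_compat; lra. }
  rewrite plus_INR. nra.
Qed.

End ContinuedFraction.

Lemma factor_at_S (s : nat -> bool) (i L : nat) :
  factor_at s i (S L) = s i :: factor_at s (S i) L.
Proof.
  unfold factor_at. simpl. rewrite Nat.add_0_r. f_equal.
  rewrite <- seq_shift, map_map. apply map_ext. intros t. f_equal. lia.
Qed.

Lemma length_factor_at (s : nat -> bool) (i L : nat) : length (factor_at s i L) = L.
Proof. unfold factor_at. rewrite length_map, length_seq. reflexivity. Qed.

Lemma skipn_factor_at (s : nat -> bool) (a i L : nat) : (a <= L)%nat ->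
  skipn a (factor_at s i L) = factor_at s (i + a) (L - a).
Proof.
  revert i L. induction a as [|a IH]; intros i L Ha.
  - rewrite Nat.add_0_r, Nat.sub_0_r. reflexivity.
  - destruct L as [|L]; [lia |]. rewrite factor_at_S. simpl. rewrite IH by lia.
    f_equal. lia.
Qed.

Lemma firstn_factor_at (s : nat -> bool) (a i L : nat) : (a <= L)%nat ->
  firstn a (factor_at s i L) = factor_at s i a.
Proof.
  revert i L. induction a as [|a IH]; intros i L Ha; [reflexivity |].
  destruct L as [|L]; [lia |]. rewrite !factor_at_S. simpl. rewrite IH by lia. reflexivity.
Qed.

Lemma factor_at_block (s : nat -> bool) (i m e j : nat) : (j < e)%nat ->
  firstn m (skipn (j * m) (factor_at s i (m * e))) = factor_at s (i + j * m) m.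
Proof. intros Hj. rewrite skipn_factor_at by nia. apply firstn_factor_at. nia. Qed.

Lemma count_ones_cons (b : bool) (l : list bool) :
  Z.of_nat (count_ones (b :: l)) = (Z.b2z b + Z.of_nat (count_ones l))%Z.
Proof.
  unfold count_ones.
  destruct b;
    [rewrite count_occ_cons_eq by reflexivity | rewrite count_occ_cons_neq by discriminate];
    cbn [Z.b2z]; lia.
Qed.

Lemma abelian_equiv_of_count_ones (u v : list bool) :
  length u = length v -> count_ones u = count_ones v -> abelian_equiv u v.
Proof.
  assert (Hlen : forall l, (count_zeros l + count_ones l)%nat = length l).
  { unfold count_zeros, count_ones.
    induction l as [|[] l IH]; simpl; lia. }
  intros H1 H2. pose proof (Hlen u). pose proof (Hlen v). split; lia.
Qed.

Lemma Int_part_arith_prog_bound (z D : R) (c : Z) (e : nat) :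
  (forall j, (j < e)%nat -> (Int_part (z + INR (S j) * D) - Int_part (z + INR j * D))%Z = c) ->
  INR e * Rabs (D - IZR c) < 1.
Proof.
  intros Hsteps.
  assert (Hprog : forall j, (j <= e)%nat ->
            Int_part (z + INR j * D) = (Int_part z + Z.of_nat j * c)%Z).
  { induction j as [|j IH]; intros Hj.
    - rewrite Rmult_0_l, Rplus_0_r. lia.
    - specialize (Hsteps j ltac:(lia)). rewrite IH in Hsteps by lia. lia. }
  specialize (Hprog e (le_n e)).
  destruct (base_Int_part (z + INR e * D)) as [B1 B2].
  destruct (base_Int_part z) as [C1 C2].
  rewrite Hprog, plus_IZR, mult_IZR, <- INR_IZR_INZ in B1, B2.
  pose proof (pos_INR e).
  rewrite <- (Rabs_right (INR e)), <- Rabs_mult by lra.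
  apply Rabs_def1; nra.
Qed.

Lemma exists_Int_part_arith_prog (D : R) (c : Z) (e : nat) :
  INR e * Rabs (D - IZR c) < 1 ->
  exists rho, 0 <= rho < 1 /\
    forall j, (j <= e)%nat -> Int_part (rho + INR j * D) = (Z.of_nat j * c)%Z.
Proof.
  intros He. set (d := D - IZR c) in *. pose proof (pos_INR e).
  assert (HD : D = d + IZR c) by (unfold d; ring).
  destruct (Rle_or_lt 0 d) as [Hd | Hd].
  - rewrite Rabs_right in He by lra. exists 0. split; [lra |].
    intros j Hj. apply Int_part_eq. rewrite mult_IZR, <- INR_IZR_INZ, HD.
    apply le_INR in Hj. pose proof (pos_INR j). nra.
  - rewrite Rabs_left in He by lra. exists (- INR e * d). split; [nra |].
    intros j Hj. apply Int_part_eq. rewrite mult_IZR, <- INR_IZR_INZ, HD.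
    apply le_INR in Hj. pose proof (pos_INR j). nra.
Qed.

(* Sturmian words are the lower ([closed_left = true]) and upper mechanical
   words; this is the floor, resp. ceiling, of [rho + n alpha]. *)
Definition sturmian_height (alpha rho : R) (closed_left : bool) (n : nat) : Z :=
  if closed_left then Int_part (rho + INR n * alpha)
  else (- Int_part (- (rho + INR n * alpha)))%Z.

Section Sturmian.

Variable alpha : R.
Hypothesis alpha_range : 0 < alpha < 1.

Lemma sturmian_letter (rho : R) (cl : bool) (n : nat) :
  Z.b2z (sturmian alpha rho cl n) =
  (sturmian_height alpha rho cl (S n) - sturmian_height alpha rho cl n)%Z.
Proof.
  unfold sturmian, sturmian_height, frac. rewrite S_INR.
  set (y := rho + INR n * alpha).
  replace (rho + (INR n + 1) * alpha) with (y + alpha) by (unfold y; ring).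
  destruct (base_Int_part y) as [B1 B2]. set (f := Int_part y) in *.
  destruct cl.
  - destruct (Rlt_dec (y - IZR f) (1 - alpha)); simpl.
    + rewrite (Int_part_eq (y + alpha) f) by lra. lia.
    + rewrite (Int_part_eq (y + alpha) (f + 1)) by (rewrite plus_IZR; lra). lia.
  - replace (- (y + alpha)) with (- y - alpha) by ring.
    destruct (Rlt_dec 0 (y - IZR f)) as [H | H]; simpl.
    + rewrite (Int_part_eq (- y) (- f - 1)) by (rewrite minus_IZR, opp_IZR; lra).
      destruct (Rle_dec (y - IZR f) (1 - alpha)); simpl.
      * rewrite (Int_part_eq (- y - alpha) (- f - 1)) by (rewrite minus_IZR, opp_IZR; lra).
        lia.
      * rewrite (Int_part_eq (- y - alpha) (- f - 2)) by (rewrite minus_IZR, opp_IZR; lra).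
        lia.
    + rewrite (Int_part_eq (- y) (- f)) by (rewrite opp_IZR; lra).
      rewrite (Int_part_eq (- y - alpha) (- f - 1)) by (rewrite minus_IZR, opp_IZR; lra).
      lia.
Qed.

Lemma count_ones_sturmian_factor (rho : R) (cl : bool) (i m : nat) :
  Z.of_nat (count_ones (factor_at (sturmian alpha rho cl) i m)) =
  (sturmian_height alpha rho cl (i + m) - sturmian_height alpha rho cl i)%Z.
Proof.
  revert i. induction m as [|m IH]; intros i.
  - rewrite Nat.add_0_r. simpl. lia.
  - rewrite factor_at_S, count_ones_cons, sturmian_letter, IH.
    replace (S i + m)%nat with (i + S m)%nat by lia. lia.
Qed.

Lemma sturmian_height_arith_prog_bound (rho : R) (cl : bool) (i m e : nat) (c : Z) :
  (forall j, (j < e)%nat ->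
     (sturmian_height alpha rho cl (i + S j * m) -
      sturmian_height alpha rho cl (i + j * m))%Z = c) ->
  INR e * Rabs (INR m * alpha - IZR c) < 1.
Proof.
  intros Hsteps. set (z := rho + INR i * alpha).
  assert (Hpos : forall j, rho + INR (i + j * m) * alpha = z + INR j * (INR m * alpha))
    by (intros j; unfold z; rewrite plus_INR, mult_INR; ring).
  destruct cl.
  - apply (Int_part_arith_prog_bound z). intros j Hj.
    rewrite <- (Hsteps j Hj). unfold sturmian_height. rewrite !Hpos. reflexivity.
  - replace (INR m * alpha - IZR c) with (- (- (INR m * alpha) - IZR (- c)))
      by (rewrite opp_IZR; ring).
    rewrite Rabs_Ropp. apply (Int_part_arith_prog_bound (- z)). intros j Hj.
    rewrite <- (Hsteps j Hj). unfold sturmian_height. rewrite !Hpos.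
    replace (- z + INR (S j) * - (INR m * alpha)) with (- (z + INR (S j) * (INR m * alpha)))
      by ring.
    replace (- z + INR j * - (INR m * alpha)) with (- (z + INR j * (INR m * alpha)))
      by ring.
    lia.
Qed.

Lemma abelian_power_mul_dist_int_lt (w : list bool) (m e : nat) :
  in_L alpha w -> abelian_power m e w -> INR e * dist_int (INR m * alpha) < 1.
Proof.
  intros [rho [cl [i [_ Hw]]]] [Hlen Hequiv]. rewrite Hlen in Hw.
  destruct e as [|e]; [simpl; lra |].
  set (c := Z.of_nat (count_ones (factor_at (sturmian alpha rho cl) i m))).
  assert (Hsteps : forall j, (j < S e)%nat ->
            (sturmian_height alpha rho cl (i + S j * m) -
             sturmian_height alpha rho cl (i + j * m))%Z = c).
  { intros j Hj. destruct (Hequiv j 0%nat Hj ltac:(lia)) as [_ Hones].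
    rewrite Hw, !factor_at_block in Hones by lia.
    unfold c. rewrite Nat.mul_0_l, Nat.add_0_r in Hones. rewrite <- Hones.
    rewrite count_ones_sturmian_factor. f_equal. f_equal. lia. }
  pose proof (sturmian_height_arith_prog_bound rho cl i m (S e) c Hsteps).
  pose proof (dist_int_le_Rabs (INR m * alpha) c). pose proof (pos_INR (S e)).
  nra.
Qed.

Lemma ab_ge_of_mul_dist_int_lt (m e : nat) :
  INR e * dist_int (INR m * alpha) < 1 -> ab_ge alpha m e.
Proof.
  intros He. destruct (dist_int_attained (INR m * alpha)) as [c Hc].
  rewrite <- Hc in He.
  destruct (exists_Int_part_arith_prog _ c e He) as [rho [Hrho Hprog]].
  assert (Hones : forall j, (j < e)%nat ->
            Z.of_nat (count_ones (factor_at (sturmian alpha rho true) (j * m) m)) = c).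
  { intros j Hj. rewrite count_ones_sturmian_factor. unfold sturmian_height.
    replace (INR (j * m + m)) with (INR (S j) * INR m) by (rewrite S_INR, plus_INR, mult_INR; ring).
    rewrite mult_INR, !Rmult_assoc, !Hprog by lia. lia. }
  exists (factor_at (sturmian alpha rho true) 0 (m * e)), e.
  split; [| split; [split |]].
  - exists rho, true, 0%nat. split; [exact Hrho |]. rewrite length_factor_at. reflexivity.
  - apply length_factor_at.
  - intros j j' Hj Hj'. rewrite !factor_at_block, !Nat.add_0_l by assumption.
    apply abelian_equiv_of_count_ones; [rewrite !length_factor_at; reflexivity |].
    apply Nat2Z.inj. rewrite !Hones by assumption. reflexivity.
  - apply Nat.le_refl.
Qed.

End Sturmian.

Theorem lemma3p4 (alpha : R) (m k : nat) :
  0 < alpha < 1 -> irrational alpha -> (2 <= cf_a alpha 1)%nat -> (0 < m)%nat ->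
  (dist_int (INR m * alpha) <= dist_int (INR (cf_q alpha k) * alpha) ->
     ab_ge alpha m (cf_q alpha (S k))) /\
  (dist_int (INR m * alpha) >= dist_int (INR (cf_q alpha k) * alpha) ->
     ab_lt alpha m (cf_q alpha (S k) + cf_q alpha k)).
Proof.
  intros Ha Hirr Ha1 _.
  rewrite (dist_int_cf_q alpha Ha Hirr k Ha1).
  pose proof (cf_q_S_mul_rem_prod_lt alpha Ha Hirr k) as Hlt.
  pose proof (cf_q_add_mul_rem_prod_gt alpha Ha Hirr k) as Hgt.
  pose proof (cf_rem_prod_pos alpha Ha Hirr (S k)) as Hpos.
  split.
  - intros Hle. apply ab_ge_of_mul_dist_int_lt; [exact Ha |].
    pose proof (pos_INR (cf_q alpha (S k))). nra.
  - intros Hge w e Hw Hpow.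
    pose proof (abelian_power_mul_dist_int_lt alpha Ha w m e Hw Hpow) as He.
    destruct (Nat.lt_ge_cases e (cf_q alpha (S k) + cf_q alpha k)) as [| Hq];
      [assumption | exfalso].
    apply le_INR in Hq. pose proof (pos_INR (cf_q alpha (S k) + cf_q alpha k)). nra.
Qed.
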